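(* Let $k\geq 2$ and let $G\subseteq V_{n-3}$ be a $(2k-2)$-set with property $P_{n-3}$. Then $F=G\cup\{n-2,n-1,n\}$ is a facet of $B^{2k,k-1}_n$.
   Context: $V_n=\{\pm1,\dots,\pm n\}$; $-X$ denotes the image of $X$ under $v\mapsto -v$. For pure complexes $\Gamma\subseteq\Delta$ of the same dimension, $\Delta\setminus\Gamma$ is the subcomplex generated by the facets of $\Delta$ not facets of $\Gamma$. $\overline{W}$ is the simplex on $W$, $*$ is the join, $\Delta*v=\Delta*\overline{\{v\}}$. The complexes $\Delta^d_n$ and $B^{d,i}_n$ are defined recursively: $\Delta^1_n$ is the cycle $(1,2,\dots,n,-1,\dots,-n,1)$; $\Delta^d_{d+1}$ is the boundary complex of the $(d+1)$-cross-polytope on $V_{d+1}$; $B^{d,j}_n=\emptyset$ for $j<0$; $B^{1,0}_n=\overline{\{-1,n\}}$; for $d=2k$, $n\geq 2k$: $B^{2k-1,k}_n=\Delta^{2k-1}_n\setminus B^{2k-1,k-1}_n$; for $n\geq d+1$, $i\leq\lfloor d/2\rfloor$: $B^{d,i}_n=(B^{d-1,i}_{n-1}*n)\cup((-B^{d-1,i-1}_{n-1})*(-n))$; $\Delta^d_{n+1}$ is obtained from $\Delta^d_n$ by replacing $B^{d,\lceil d/2\rceil-1}_n$ with $\partial B^{d,\lceil d/2\rceil-1}_n*(n+1)$ and $-B^{d,\lceil d/2\rceil-1}_n$ with $\partial(-B^{d,\lceil d/2\rceil-1}_n)*(-n-1)$. A $2j$-set $G=\{p_1,\dots,p_{2j}\}\subseteq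 V_N$ has property $P_N$ if $1\leq|p_1|<\dots<|p_{2j}|\leq N$, $p_{2i-1},p_{2i}$ have the same sign for all $i$, $|p_2|-|p_1|=1$, and $|p_{2i}|-|p_{2i-1}|=2$ for $2\leq i\leq j$. *)

From HB Require Import structures.
From mathcomp Require Import all_boot all_order all_algebra.
From mathcomp Require Import finmap.
Set Implicit Arguments. Unset Strict Implicit. Unset Printing Implicit Defensive.
Import GRing.Theory Num.Theory.
Local Open Scope fset_scope.
Local Open Scope ring_scope.
Local Open Scope fset_scope.

(* A pure simplicial complex on vertices in Z\{0} is represented by its set of
   facets; a face/facet is a finite set of integers (vertex v <-> v, -v <-> -v). *)
Notation cplx := {fset {fset int}}.

Definition V (n : nat) : {fset int} :=
  [fset (i.+1)%:Z | i in iota 0 n] `|` [fset (- (i.+1)%:Z)%R | i in iota 0 n].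

Definition negF (X : {fset int}) : {fset int} := [fset (- v)%R | v in X].
Definition negC (D : cplx) : cplx := [fset negF F | F in D].

Definition joinv (D : cplx) (v : int) : cplx := [fset v |` F | F in D].

(* Delta \ Gamma : complex generated by the facets of Delta not facets of Gamma *)
Definition cdiff (D G : cplx) : cplx := D `\` G.

(* boundary of a pure complex (a ball): codimension-one faces lying in exactly
   one facet *)
Definition ridges (D : cplx) : cplx := [fset F `\ v | F in D, v in F].
Definition bdry (D : cplx) : cplx :=
  [fset R in ridges D | #|` [fset F in D | R `<=` F] | == 1%N].

(* Delta^1_n : the cycle (1,2,...,n,-1,...,-n,1) *)
Definition cycle1 (n : nat) : cplx :=
  [fset (i%:Z |` [fset (i.+1)%:Z]) | i in iota 1 n.-1]
  `|` [fset ((- i%:Z)%R |` [fset (- (i.+1)%:Z)%R]) | i in iota 1 n.-1]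
  `|` [fset (n%:Z |` [fset (-1)%R])]
  `|` [fset ((- n%:Z)%R |` [fset 1%R])].

(* boundary complex of the m-dimensional cross-polytope on V_m (facets) *)
Fixpoint cross (m : nat) : cplx :=
  if m is m'.+1 then joinv (cross m') m%:Z `|` joinv (cross m') (- m%:Z)%R
  else [fset fset0].

(* Delta^D_{D+1+m}, given Bd n = B^{D, ceil(D/2)-1}_n *)
Fixpoint DeltaAux (Bd : nat -> cplx) (D m : nat) : cplx :=
  if m is m'.+1 then
    let n := (D.+1 + m')%N in
    let B := Bd n in
    (((DeltaAux Bd D m' `\` B) `\` negC B)
       `|` joinv (bdry B) (n.+1)%:Z)
       `|` joinv (bdry (negC B)) (- (n.+1)%:Z)%R
  else cross D.+1.

(* a level: (n |-> Delta^d_n, n i |-> B^{d,i}_n) *)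
Definition level := ((nat -> cplx) * (nat -> nat -> cplx))%type.

Definition level1 : level :=
  (cycle1,
   fun n i => if i == 0%N then [fset ((-1)%R |` [fset n%:Z])]
              else if i == 1%N then cdiff (cycle1 n) [fset ((-1)%R |` [fset n%:Z])]
              else fset0).

(* from level D-1 to level D (D >= 2) *)
Definition step (D : nat) (L : level) : level :=
  let Bp := L.2 in
  let Blow n i :=
    joinv (Bp n.-1 i) n%:Z
    `|` (if i is i'.+1 then joinv (negC (Bp n.-1 i')) (- n%:Z)%R else fset0) in
  let Del n := DeltaAux (fun m => Blow m (uphalf D).-1) D (n - D.+1) in
  (Del, fun n i =>
          if (i <= D./2)%N then Blow n i
          else if odd D && (i == D./2.+1) then cdiff (Del n) (Blow n D./2)
          else fset0).

(* lev e = level e+1 *)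
Fixpoint lev (e : nat) : level :=
  if e is e'.+1 then step e.+1 (lev e') else level1.

Definition Delta (d n : nat) : cplx := (lev d.-1).1 n.
Definition Bcx (d i n : nat) : cplx := (lev d.-1).2 n i.

(* property P_N of a 2j-set G = {p_1,...,p_2j} (0-indexed here) *)
Definition propP (N : nat) (G : {fset int}) : Prop :=
  exists (j : nat) (p : seq int),
    size p = (2 * j)%N /\
    G = [fset x | x in p] /\
    (forall x, x \in p -> (1 <= absz x <= N)%N) /\
    sorted (fun x y => (absz x < absz y)%N) p /\
    (forall i, (i < j)%N -> (0 < nth (0:int) p (2 * i))%R = (0 < nth (0:int) p (2 * i).+1)%R) /\
    ((0 < j)%N -> absz (nth (0:int) p 1) = (absz (nth (0:int) p 0)).+1) /\
    (forall i, (1 <= i < j)%N -> absz (nth (0:int) p (2 * i).+1) = (absz (nth (0:int) p (2 * i)) + 2)%N).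

From mathcomp Require Import all_boot all_order all_algebra finmap.
From mathcomp Require Import zify.
Set Implicit Arguments. Unset Strict Implicit. Unset Printing Implicit Defensive.
Import GRing.Theory Num.Theory.
Local Open Scope fset_scope.
Local Open Scope ring_scope.

(* By definition B^{d,i}_{m+1} contains B^{d-1,i}_m * (m+1) for i <= d/2, so
   joining a facet G of B^{2k-3,k-1}_{n-3} with n-2, n-1 and n gives a facet of
   B^{2k,k-1}_n.  It remains to show that a set G with property P and 2j
   elements is a facet of the top ball B^{2j-1,j}_N = Delta^{2j-1}_N \ B^{2j-1,j-1}_N.
   By induction on j: up to a global sign, G = T + {b+1, b+3} where T has
   property P, hence is a facet of B^{2j-3,j-1}_b.  Then R = T + {b+1} is a
   ridge of B^{2j-1,j-1}_{b+2} lying in the single facet R + {b+2}: any other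
   facet through R would force T to have vertices at the consecutive levels b-1
   and b, which property P forbids.  So R + {b+3} is created as a facet of
   Delta^{2j-1}_{b+3}; having no vertex at level b+2, it is never removed later
   and never lies in B^{2j-1,j-1}, so it is a facet of the top ball. *)

Lemma in_negF (X : {fset int}) w : (w \in negF X) = (- w \in X).
Proof.
apply/imfsetP/idP => [[v vX ->]|h]; first by rewrite opprK.
by exists (- w) => //; rewrite opprK.
Qed.

Lemma negFK : involutive negF.
Proof. by move=> X; apply/fsetP => w; rewrite !in_negF opprK. Qed.

Lemma card_negF X : #|` negF X| = #|` X|.
Proof. by apply/eqP/card_in_imfsetP => x y _ _; apply: oppr_inj. Qed.

Lemma negFU1 v X : negF (v |` X) = - v |` negF X.
Proof.
apply/fsetP => w; rewrite in_negF !in_fset1U in_negF.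
by rewrite (can2_eq opprK opprK).
Qed.

Lemma fsubset_negF X Y : negF X `<=` Y -> X `<=` negF Y.
Proof.
move=> /fsubsetP sXY; apply/fsubsetP => w wX; rewrite in_negF; apply: sXY.
by rewrite in_negF opprK.
Qed.

Lemma in_negC (D : cplx) F : (F \in negC D) = (negF F \in D).
Proof.
apply/imfsetP/idP => [[H HD ->]|h]; first by rewrite negFK.
by exists (negF F) => //; rewrite negFK.
Qed.

Lemma joinvP (D : cplx) v F :
  reflect (exists2 X, X \in D & F = v |` X) (F \in joinv D v).
Proof. exact: imfsetP. Qed.

Lemma mem_joinv (D : cplx) v X : X \in D -> v |` X \in joinv D v.
Proof. by move=> XD; apply/joinvP; exists X. Qed.

Lemma fsetU1_eq_card (v : int) (R X : {fset int}) :
  v \notin R -> R `<=` v |` X -> #|` R| = #|` X| -> R = X.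
Proof.
move=> vR /fsubsetP sRX cRX.
have sR : R `<=` X.
  apply/fsubsetP => w wR; have := sRX w wR.
  by rewrite in_fset1U => /orP[/eqP wv|//]; rewrite -wv wR in vR.
by apply/eqP; rewrite -(fsubset_leqif_cards sR).2 cRX.
Qed.

Definition pure_bounded (s m : nat) (C : cplx) :=
  forall F, F \in C -> #|` F| = s /\ forall x, x \in F -> (absz x <= m)%N.

Lemma pure_bounded_sub s m (C C' : cplx) :
  {subset C' <= C} -> pure_bounded s m C -> pure_bounded s m C'.
Proof. by move=> sCC' bC F /sCC' /bC. Qed.

Lemma pure_boundedU s m (C1 C2 : cplx) :
  pure_bounded s m C1 -> pure_bounded s m C2 -> pure_bounded s m (C1 `|` C2).
Proof. by move=> b1 b2 F; rewrite in_fsetU => /orP[/b1|/b2]. Qed.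

Lemma pure_bounded_widen s m m' C :
  (m <= m')%N -> pure_bounded s m C -> pure_bounded s m' C.
Proof. by move=> mm' bC F /bC [-> bF]; split=> // x /bF /leq_trans; apply. Qed.

Lemma pure_bounded0 s m : pure_bounded s m fset0.
Proof. by move=> F; rewrite in_fset0. Qed.

Lemma pure_bounded_negC s m C : pure_bounded s m C -> pure_bounded s m (negC C).
Proof.
move=> bC F; rewrite in_negC => /bC [cF bF]; split; first by rewrite -card_negF.
by move=> x xF; have := bF (- x); rewrite in_negF opprK abszN; apply.
Qed.

Lemma pure_bounded_joinv s m C v :
  pure_bounded s m C -> absz v = m.+1 -> pure_bounded s.+1 m.+1 (joinv C v).
Proof.
move=> bC hv F /joinvP [X /bC [cX bX] ->]; split.
  by rewrite cardfsU1 cX; case: (boolP (v \in X)) => // /bX; rewrite hv ltnn.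
move=> x; rewrite in_fset1U => /orP[/eqP ->|/bX]; first by rewrite hv.
by move/leq_trans; apply.
Qed.

Lemma pure_bounded_bdry s m C : pure_bounded s.+1 m C -> pure_bounded s m (bdry C).
Proof.
move=> bC R; rewrite in_fsetE /= => /andP[/imfset2P [F /= FC [v /= vF ->]] _].
have [cF bF] := bC F FC; split.
  by move: cF; rewrite (cardfsD1 v) vF add1n => -[].
by move=> x; rewrite in_fsetD1 => /andP[_ /bF].
Qed.

Lemma pure_bounded_cross m : pure_bounded m m (cross m).
Proof.
elim: m => [|m IH] /=.
  by move=> F; rewrite in_fset1 => /eqP ->; split=> // x; rewrite in_fset0.
by apply: pure_boundedU; apply: pure_bounded_joinv; rewrite ?abszN.
Qed.

Lemma pure_bounded_edge (a b : int) n :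
  a != b -> (absz a <= n)%N -> (absz b <= n)%N -> pure_bounded 2 n [fset a |` [fset b]].
Proof.
move=> ab ha hb F; rewrite in_fset1 => /eqP ->.
split; first by rewrite cardfsU1 cardfs1 in_fset1 ab.
by move=> x; rewrite in_fset1U in_fset1 => /orP[]/eqP->.
Qed.

Lemma pure_bounded_cycle1 n : (2 <= n)%N -> pure_bounded 2 n (cycle1 n).
Proof.
move=> n2 F; rewrite !in_fsetU => /orP[/orP[/orP[]|]|] FC.
- case/imfsetP: FC => i /=; rewrite mem_iota => i_n ->.
  by apply: pure_bounded_edge (fset11 _) => /=; rewrite ?eqz_nat; lia.
- case/imfsetP: FC => i /=; rewrite mem_iota => i_n ->.
  by apply: pure_bounded_edge (fset11 _); rewrite ?abszN ?eqr_opp ?eqz_nat /=; lia.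
- by apply: pure_bounded_edge FC => //; lia.
- apply: pure_bounded_edge FC; rewrite ?abszN //; last by case: n n2.
  by rewrite -[1]opprK eqr_opp; lia.
Qed.

Definition Bnext (Bp : nat -> nat -> cplx) (n i : nat) : cplx :=
  joinv (Bp n.-1 i) n%:Z `|`
  (if i is i'.+1 then joinv (negC (Bp n.-1 i')) (- n%:Z) else fset0).

Lemma step_DeltaE D (L : level) n :
  (step D L).1 n = DeltaAux (fun m => Bnext L.2 m (uphalf D).-1) D (n - D.+1).
Proof. by []. Qed.

Lemma step_BcxE D (L : level) n i : (step D L).2 n i =
  if (i <= D./2)%N then Bnext L.2 n i
  else if odd D && (i == D./2.+1) then
    cdiff ((step D L).1 n) (Bnext L.2 n D./2)
  else fset0.
Proof. by []. Qed.

Lemma DeltaE d n : Delta d.+2 n = (step d.+2 (lev d)).1 n.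
Proof. by []. Qed.

Lemma BcxE d i n : Bcx d.+2 i n = (step d.+2 (lev d)).2 n i.
Proof. by []. Qed.

Lemma pure_bounded_DeltaAux Bd D :
  (forall n, (D.+1 <= n)%N -> pure_bounded D.+1 n (Bd n)) ->
  forall m, pure_bounded D.+1 (D.+1 + m) (DeltaAux Bd D m).
Proof.
move=> bB; elim=> [|m IH] /=; first by rewrite addn0; apply: pure_bounded_cross.
have bBm := bB (D.+1 + m)%N (leq_addr _ _).
rewrite addnS; apply: pure_boundedU; first apply: pure_boundedU.
- apply: pure_bounded_widen (leqnSn _) _; apply: pure_bounded_sub IH => F.
  by rewrite !in_fsetD => /andP[_ /andP[_ ->]].
- by apply: pure_bounded_joinv => //; apply: pure_bounded_bdry.
- apply: pure_bounded_joinv; last by rewrite abszN.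
  by apply/pure_bounded_bdry/pure_bounded_negC.
Qed.

Lemma pure_bounded_lev e n : (e.+2 <= n)%N ->
  pure_bounded e.+2 n ((lev e).1 n) /\ forall i, pure_bounded e.+2 n ((lev e).2 n i).
Proof.
elim: e n => [|e IH] n hn.
  split; first exact: pure_bounded_cycle1.
  case=> [|[|i]] /=; last exact: pure_bounded0.
    by apply: pure_bounded_edge => //; lia.
  by apply: pure_bounded_sub (pure_bounded_cycle1 hn) => F /fsetDP[].
have bBnext m i : (e.+3 <= m)%N -> pure_bounded e.+3 m (Bnext (lev e).2 m i).
  case: m => // m hm; have [_ bB] := IH m hm.
  apply: pure_boundedU; first exact: pure_bounded_joinv.
  case: i => [|i]; first exact: pure_bounded0.
  by apply: pure_bounded_joinv; rewrite ?abszN //; apply: pure_bounded_negC.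
have bDelta : pure_bounded e.+3 n ((lev e.+1).1 n).
  rewrite -[(lev _).1 _]DeltaE DeltaE step_DeltaE -{1}(subnKC hn).
  by apply: pure_bounded_DeltaAux => m; apply: bBnext.
split=> // i; rewrite -[(lev _).2 _ _]BcxE BcxE step_BcxE.
case: ifP => _; first exact: bBnext.
case: ifP => _; last exact: pure_bounded0.
by apply: pure_bounded_sub bDelta => F /fsetDP[].
Qed.

Lemma pure_bounded_Bcx D i n :
  (1 <= D)%N -> (D.+1 <= n)%N -> pure_bounded D.+1 n (Bcx D i n).
Proof. by case: D => // D _ /pure_bounded_lev[_]; apply. Qed.

Lemma half_odd j : ((2 * j).+1./2 = j)%N.
Proof. by rewrite mul2n -add1n (half_bit_double j true). Qed.

Lemma BcxS D i n : (2 <= D)%N -> (i <= D./2)%N ->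
  Bcx D i n.+1 = joinv (Bcx D.-1 i n) n.+1%:Z `|`
    (if i is i'.+1 then joinv (negC (Bcx D.-1 i' n)) (- n.+1%:Z) else fset0).
Proof. by case: D => [|[|e]] // _ hi; rewrite BcxE step_BcxE hi. Qed.

Lemma mem_BcxS D i n F : F \in Bcx D i n -> (1 <= D)%N -> (i <= D.+1./2)%N ->
  n.+1%:Z |` F \in Bcx D.+1 i n.+1.
Proof. by move=> FB hD hi; rewrite BcxS ?in_fsetU ?mem_joinv. Qed.

Lemma Bcx_odd_topE j n :
  Bcx (2 * j).+1 j.+1 n = Delta (2 * j).+1 n `\` Bcx (2 * j).+1 j n.
Proof.
case: j => [|j] //; have -> : (2 * j.+1).+1 = (2 * j).+3 by lia.
rewrite !BcxE DeltaE !step_BcxE.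
have -> : ((2 * j).+3./2 = j.+1)%N by rewrite -(half_odd j.+1) mulnS.
by rewrite ltnn leqnn /= mul2n odd_double eqxx.
Qed.

Lemma Delta_oddS j m : (1 <= j)%N -> ((2 * j).+2 <= m)%N ->
  Delta (2 * j).+1 m.+1 =
    ((Delta (2 * j).+1 m `\` Bcx (2 * j).+1 j m) `\` negC (Bcx (2 * j).+1 j m))
    `|` joinv (bdry (Bcx (2 * j).+1 j m)) m.+1%:Z
    `|` joinv (bdry (negC (Bcx (2 * j).+1 j m))) (- m.+1%:Z).
Proof.
case: j => [|j] // _; have -> : (2 * j.+1).+1 = (2 * j).+3 by lia.
move=> hm; rewrite BcxE !DeltaE !step_DeltaE step_BcxE.
have -> : ((2 * j).+3./2 = j.+1)%N by rewrite -(half_odd j.+1) mulnS.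
have -> : (uphalf (2 * j).+3 = j.+2)%N by rewrite /= mul2n doubleK.
by rewrite leqnn (subSn hm) /= (subnKC hm).
Qed.

(** * Levels of vertices in the balls *)

Definition has_abs (F : {fset int}) (m : nat) := exists2 w, w \in F & absz w = m.

Lemma has_abs_negF F m : has_abs (negF F) m -> has_abs F m.
Proof. by case=> w; rewrite in_negF => wF <-; exists (- w); rewrite ?abszN. Qed.

Lemma has_abs_sub F F' m : F `<=` F' -> has_abs F m -> has_abs F' m.
Proof. by move=> /fsubsetP sFF' [w /sFF' wF' <-]; exists w. Qed.

Lemma has_abs_fset1U v F m : has_abs (v |` F) m -> absz v != m -> has_abs F m.
Proof.
by case=> w; rewrite in_fset1U => /orP[/eqP -> -> /eqP //|wF <-]; exists w.
Qed.

Lemma Bcx_has_abs D i m F : (2 <= D)%N -> (i <= D./2)%N -> (0 < m)%N ->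
  F \in Bcx D i m -> has_abs F m.
Proof.
case: m => // m hD hi _; rewrite BcxS // in_fsetU => /orP[].
  by case/joinvP => X _ ->; exists m.+1%:Z; rewrite ?fset1U1.
case: i hi => [|i] hi; first by rewrite in_fset0.
by case/joinvP => X _ ->; exists (- m.+1%:Z); rewrite ?fset1U1 ?abszN.
Qed.

Lemma Bcx_has_abs_pred D i m F : (3 <= D)%N -> (i <= D.-1./2)%N -> (1 < m)%N ->
  F \in Bcx D i m -> has_abs F m.-1.
Proof.
case: m => // m hD hi hm.
have hD' : (2 <= D.-1)%N by lia.
rewrite BcxS; [|lia|by apply: leq_trans hi _; apply/half_leq/leq_pred].
rewrite in_fsetU => /orP[].
  case/joinvP => X XB ->; apply: has_abs_sub (fsubsetU1 _ _) _.
  exact: Bcx_has_abs hD' hi _ XB.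
case: i hi => [|i] hi; first by rewrite in_fset0.
case/joinvP => X; rewrite in_negC => XB ->; apply: has_abs_sub (fsubsetU1 _ _) _.
by apply/has_abs_negF/(Bcx_has_abs hD' _ _ XB) => //; apply: ltnW.
Qed.

(** * Boundary ridges and survival of facets *)

Lemma mem_bdry_uniq (C : cplx) R v : v |` R \in C -> v \notin R ->
  (forall H, H \in C -> R `<=` H -> H = v |` R) -> R \in bdry C.
Proof.
move=> vRC vR uniqR; rewrite in_fset /=; apply/andP; split.
  have -> : R = (v |` R) `\ v by rewrite fsetU1K.
  by apply/imfset2P; exists (v |` R) => //; exists v => //; rewrite fset1U1.
have -> : [fset F in C | R `<=` F] = [fset v |` R].
  apply/fsetP => H; rewrite in_fset1 in_fset /=; apply/andP/eqP.
    by case=> HC RH; apply: uniqR.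
  by move=> ->; split=> //; apply: fsubsetU1.
by rewrite cardfs1.
Qed.

Lemma notin_Bcx_mid J a m Q : (1 <= J)%N -> (a.+2 <= m)%N ->
  ~ has_abs Q a.+1 -> (forall w, w \in Q -> (absz w <= a.+2)%N) ->
  Q \notin Bcx (2 * J).+1 J m /\ Q \notin negC (Bcx (2 * J).+1 J m).
Proof.
move=> hJ ha Qa Qb.
have hD : (3 <= (2 * J).+1)%N by lia.
have hi : (J <= (2 * J).+1./2)%N by rewrite half_odd.
have hi' : (J <= (2 * J).+1.-1./2)%N by rewrite /= mul2n doubleK.
suff notB F : F \in Bcx (2 * J).+1 J m -> ~ has_abs F a.+1 ->
    (forall w, w \in F -> (absz w <= a.+2)%N) -> False.
  split; apply/negP; first by move/notB; apply.
  rewrite in_negC => /notB; apply; first by move/has_abs_negF.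
  by move=> w; rewrite in_negF => /Qb; rewrite abszN.
move=> + Fa Fb; case: (ltngtP a.+2 m) ha => // [lt_am|<-] _ FB.
  have [w /Fb] := Bcx_has_abs (ltnW hD) hi (ltn_trans (ltn0Sn _) lt_am) FB; lia.
by apply/Fa/(Bcx_has_abs_pred hD hi' _ FB).
Qed.

(* Such a facet is never removed later: the facets removed in the step from m
   to m+1 lie in +-B^{2J+1,J}_m, and each has vertices at levels m and m-1. *)
Lemma mem_Bcx_odd_top J a Q : (1 <= J)%N -> ((2 * J).+2 <= a.+2)%N ->
  Q \in Delta (2 * J).+1 a.+2 ->
  ~ has_abs Q a.+1 -> (forall w, w \in Q -> (absz w <= a.+2)%N) ->
  forall N, (a.+2 <= N)%N -> Q \in Bcx (2 * J).+1 J.+1 N.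
Proof.
move=> hJ ha QD Qa Qb N hN.
have QDk k : Q \in Delta (2 * J).+1 (a.+2 + k).
  elim: k => [|k IH]; first by rewrite addn0.
  rewrite addnS Delta_oddS //; last by apply: leq_trans ha (leq_addr _ _).
  have [nB nNB] := notin_Bcx_mid hJ (leq_addr k _) Qa Qb.
  by rewrite !in_fsetU !in_fsetD nB nNB IH.
rewrite Bcx_odd_topE in_fsetD (notin_Bcx_mid hJ hN Qa Qb).1 /=.
by rewrite -(subnKC hN) QDk.
Qed.

(** * Adding a pair of vertices *)

Section OddTopExtension.

Variables (J b : nat) (T : {fset int}).
Hypotheses (J_gt0 : (1 <= J)%N) (Jb : (2 * J <= b)%N).
Hypothesis T_bounded : forall w, w \in T -> (absz w <= b)%N.
Hypothesis T_card : #|` T| = (2 * J)%N.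
Hypothesis T_gap : (2 <= J)%N -> ~ (has_abs T b /\ has_abs T b.-1).

Let R := b.+1%:Z |` T.

Let R_card : #|` R| = (2 * J).+1.
Proof.
rewrite cardfsU1 T_card; case: (boolP (b.+1%:Z \in T)) => // /T_bounded.
by rewrite /= ltnn.
Qed.

Let R_bounded w : w \in R -> (absz w <= b.+1)%N.
Proof. by rewrite in_fset1U => /orP[/eqP ->|/T_bounded] //; lia. Qed.

Let R_notin_negC_Bcx : R \notin negC (Bcx (2 * J) J.-1 b.+1).
Proof.
apply/negP; rewrite in_negC /R negFU1 BcxS; [|lia|rewrite mul2n doubleK; lia].
rewrite in_fsetU => /orP[].
  case/joinvP => Y _ /(congr1 (fun X => b.+1%:Z \in X)).
  rewrite fset1U1 in_fset1U in_negF => /orP[/eqP|/T_bounded]; lia.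
case: J J_gt0 Jb T_card T_gap => [|[|J']] // _ hb _ gap.
case/joinvP => Y; rewrite in_negC => YB eY.
have sY : Y `<=` - b.+1%:Z |` negF T by rewrite eY fsubsetU1.
have hT m : has_abs (negF Y) m -> absz (- b.+1%:Z) != m -> has_abs T m.
  by move=> /has_abs_negF/(has_abs_sub sY)/has_abs_fset1U h /h/has_abs_negF.
apply: (gap isT); split; apply: hT; rewrite ?abszN //=; try lia.
  by apply: (Bcx_has_abs _ _ _ YB); rewrite /= ?mul2n ?doubleK; lia.
by apply: (Bcx_has_abs_pred _ _ _ YB); rewrite /= ?mul2n ?doubleK; lia.
Qed.

Let Bcx_odd_cofacet_uniq H :
  H \in Bcx (2 * J).+1 J b.+2 -> R `<=` H -> H = b.+2%:Z |` R.
Proof.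
have Rb2 : b.+2%:Z \notin R by apply/negP => /R_bounded /=; lia.
have RNb2 : - b.+2%:Z \notin R by apply/negP => /R_bounded; rewrite abszN /=; lia.
have bB i : pure_bounded (2 * J).+1 b.+1 (Bcx (2 * J) i b.+1).
  by apply: pure_bounded_Bcx; lia.
rewrite BcxS; [|lia|by rewrite half_odd]; rewrite in_fsetU => /orP[].
  case/joinvP => X XB -> RH; congr (_ |` _); apply/esym/(fsetU1_eq_card Rb2 RH).
  by rewrite R_card; have [-> _] := bB J X XB.
case: J J_gt0 Jb T_gap R_notin_negC_Bcx R_card bB => // J' _ _ _ RnB cR bB.
case/joinvP => X XB -> RH; have [cX _] := pure_bounded_negC (bB J') XB.
have RX : R = X by apply: fsetU1_eq_card RNb2 RH _; rewrite cR cX.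
by case/negP: RnB; rewrite RX; exact: XB.
Qed.

Lemma Bcx_odd_top_extend : T \in Bcx (2 * J).-1 J b -> forall N, (b.+3 <= N)%N ->
  b.+3%:Z |` R \in Bcx (2 * J).+1 J.+1 N /\ negF (b.+3%:Z |` R) \in Bcx (2 * J).+1 J.+1 N.
Proof.
move=> TB N hN.
have Rb2B : b.+2%:Z |` R \in Bcx (2 * J).+1 J b.+2.
  have -> : (2 * J)%N = (2 * J).-1.+1 by lia.
  apply: (mem_BcxS (mem_BcxS TB _ _)); rewrite ?prednK ?half_odd ?mul2n ?doubleK //; lia.
have Rb2 : b.+2%:Z \notin R by apply/negP => /R_bounded /=; lia.
have Rbdry : R \in bdry (Bcx (2 * J).+1 J b.+2).
  exact: mem_bdry_uniq Rb2B Rb2 Bcx_odd_cofacet_uniq.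
have NRbdry : negF R \in bdry (negC (Bcx (2 * J).+1 J b.+2)).
  apply: (mem_bdry_uniq (v := - b.+2%:Z)).
  - by rewrite -negFU1 in_negC negFK.
  - by rewrite in_negF opprK.
  move=> H; rewrite in_negC => HB /fsubset_negF RH.
  by rewrite -negFU1 -(Bcx_odd_cofacet_uniq HB RH) negFK.
have Qa : ~ has_abs (b.+3%:Z |` R) b.+2.
  by case=> w; rewrite in_fset1U => /orP[/eqP -> /=|/R_bounded]; lia.
have Qb w : w \in b.+3%:Z |` R -> (absz w <= b.+3)%N.
  by rewrite in_fset1U => /orP[/eqP -> //|/R_bounded]; lia.
have DeltaE := Delta_oddS (m := b.+2) J_gt0 (ltac:(lia)).
split; apply: (mem_Bcx_odd_top (a := b.+1)) => //; try lia.
- by rewrite DeltaE !in_fsetU mem_joinv ?orbT.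
- by rewrite DeltaE negFU1 in_fsetU mem_joinv ?orbT.
- by move/has_abs_negF.
- by move=> w; rewrite in_negF => /Qb; rewrite abszN.
Qed.

End OddTopExtension.

(** * Sequences with property P *)

Definition abs_lt : rel int := fun x y => (absz x < absz y)%N.

Lemma abs_lt_trans : transitive abs_lt.
Proof. by move=> y x z; apply: ltn_trans. Qed.

Record Pseq (j : nat) (p : seq int) : Prop := {
  Pseq_size : size p = (2 * j)%N;
  Pseq_abs_gt0 : forall x, x \in p -> (0 < absz x)%N;
  Pseq_sorted : sorted abs_lt p;
  Pseq_sign : forall i, (i < j)%N -> (0 < p`_(2 * i)) = (0 < p`_(2 * i).+1);
  Pseq_first : (0 < j)%N -> absz p`_1 = (absz p`_0).+1;
  Pseq_next : forall i, (1 <= i < j)%N -> absz p`_(2 * i).+1 = (absz p`_(2 * i)).+2 }.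

Lemma propP_Pseq N G : propP N G ->
  exists j p, [/\ Pseq j p, G = [fset z | z in p] & forall x, x \in p -> (absz x <= N)%N].
Proof.
case=> j [p [sz [-> [bp [sp [sg [f g]]]]]]]; exists j, p; split=> //.
  by split=> // [x /bp /andP[] | i /g ->]; rewrite ?addn2.
by move=> x /bp /andP[].
Qed.

Section PseqTheory.

Variables (j : nat) (p : seq int).
Hypothesis pP : Pseq j p.

Lemma Pseq_uniq : uniq p.
Proof.
apply: sorted_uniq (Pseq_sorted pP); first exact: abs_lt_trans.
by move=> x; apply: ltnn.
Qed.

Lemma card_Pseq : #|` [fset z | z in p]| = (2 * j)%N.
Proof. by rewrite card_fseq undup_id ?(Pseq_size pP) ?Pseq_uniq. Qed.

Lemma Pseq_abs_lt i k : (i < k)%N -> (k < 2 * j)%N -> (absz (p`_i)%R < absz (p`_k)%R)%N.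
Proof.
move=> ik kj; apply: (sorted_ltn_nth abs_lt_trans 0 (Pseq_sorted pP)) => //.
  by rewrite inE (Pseq_size pP) (ltn_trans ik).
by rewrite inE (Pseq_size pP).
Qed.

Lemma Pseq_abs_ge i : (i < 2 * j)%N -> (i < absz (p`_i)%R)%N.
Proof.
elim: i => [|i IH] hi; first by apply: (Pseq_abs_gt0 pP); rewrite mem_nth ?(Pseq_size pP).
by have := Pseq_abs_lt (ltnSn i) hi; have := IH (ltnW hi); lia.
Qed.

Lemma Pseq_neg : Pseq j (map -%R p).
Proof.
have nthN i : (i < 2 * j)%N -> (map -%R p)`_i = - p`_i.
  by move=> hi; rewrite (nth_map 0) ?(Pseq_size pP).
split.
- by rewrite size_map (Pseq_size pP).
- by move=> x /mapP [y /(Pseq_abs_gt0 pP) ? ->]; rewrite abszN.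
- by rewrite sorted_map; apply: sub_sorted (Pseq_sorted pP) => x y; rewrite /abs_lt /= !abszN.
- move=> i hi; rewrite !nthN; [|lia|lia].
  have := Pseq_abs_gt0 pP (mem_nth 0 (_ : 2 * i < size p)%N).
  have := Pseq_abs_gt0 pP (mem_nth 0 (_ : (2 * i).+1 < size p)%N).
  rewrite (Pseq_size pP); have := Pseq_sign pP hi.
  by move: (p`_(2 * i)) (p`_(2 * i).+1) => a b; lia.
- by move=> hj; rewrite !nthN ?abszN; [apply: (Pseq_first pP) | lia | lia].
- by move=> i hi; rewrite !nthN ?abszN; [apply: (Pseq_next pP) | lia | lia].
Qed.

End PseqTheory.

Lemma Pseq_take j p : Pseq j.+1 p -> Pseq j (take (2 * j) p).
Proof.
case=> sz h1 s sg f g.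
have nthT i : (i < 2 * j)%N -> (take (2 * j) p)`_i = p`_i by move=> hi; rewrite nth_take.
split.
- by rewrite size_takel // sz; lia.
- by move=> x /mem_take; apply: h1.
- exact: take_sorted.
- by move=> i hi; rewrite !nthT; [apply: sg; lia | lia | lia].
- by move=> hj; rewrite !nthT; [apply: f | lia | lia].
- by move=> i hi; rewrite !nthT; [apply: g; lia | lia | lia].
Qed.

Lemma Pseq_levels j q z : Pseq j.+2 q -> z \in q ->
  let c := absz (q`_(2 * j.+1))%R in [\/ (absz z < c)%N, absz z = c | absz z = c.+2].
Proof.
move=> qP zq c; rewrite -(nth_index 0 zq).
have : (index z q < 2 * j.+2)%N by rewrite -(Pseq_size qP) index_mem.
case: (ltngtP (index z q) (2 * j.+1)) => [lt _|gt lt|-> _]; last exact: Or32.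
  by apply/Or31/(Pseq_abs_lt qP lt); lia.
have -> : index z q = (2 * j.+1).+1 by lia.
by apply/Or33/(Pseq_next qP); lia.
Qed.

Lemma Pseq_gap j q b : Pseq j.+2 q -> (forall z, z \in q -> (absz z <= b)%N) ->
  ~ (has_abs [fset z | z in q] b /\ has_abs [fset z | z in q] b.-1).
Proof.
move=> qP qb [[z1 + e1] [z2 + e2]]; rewrite !in_fset /= => z1q z2q.
have := qb _ (mem_nth 0 (_ : (2 * j.+1).+1 < size q)%N).
rewrite (Pseq_next qP) ?(Pseq_size qP); try lia.
have /= := Pseq_levels qP z1q; have /= := Pseq_levels qP z2q.
by case=> ?; case=> ?; lia.
Qed.

Lemma Pseq_split_last j p N : Pseq j.+2 p -> (forall x, x \in p -> (absz x <= N)%N) ->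
  exists b q, [/\ Pseq j.+1 q, forall z, z \in q -> (absz z <= b)%N,
    (2 * j.+1 <= b)%N, (b.+3 <= N)%N &
    [fset z | z in p] = b.+3%:Z |` (b.+1%:Z |` [fset z | z in q]) \/
    [fset z | z in p] = negF (b.+3%:Z |` (b.+1%:Z |` [fset z | z in q]))].
Proof.
move=> pP pN; set p' := take (2 * j.+1) p.
have p'P : Pseq j.+1 p' := Pseq_take pP.
set x := p`_(2 * j.+1); set y := p`_(2 * j.+1).+1.
have Ep : [fset z | z in p] = y |` (x |` [fset z | z in p']).
  have ep : p = rcons (rcons p' x) y.
    by rewrite /p' /x /y -!take_nth ?take_oversize // (Pseq_size pP); lia.
  by apply/fsetP => w; rewrite !in_fset1U !in_fset /= {1}ep !(mem_rcons, in_cons).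
have xb : (2 * j.+1 < absz x)%N by apply: (Pseq_abs_ge pP); lia.
have yb : absz y = (absz x).+2 by apply: (Pseq_next pP); lia.
have yN : (absz y <= N)%N by apply/pN/mem_nth; rewrite (Pseq_size pP); lia.
have p'b z : z \in p' -> (absz z < absz x)%N.
  have sp' : size p' = (2 * j.+1)%N by rewrite size_takel ?(Pseq_size pP) //; lia.
  move=> zp'; rewrite -(nth_index 0 zp') nth_take -?sp' ?index_mem //.
  by apply: (Pseq_abs_lt pP); rewrite -?sp' ?index_mem //; lia.
have sg : (0 < x) = (0 < y) := Pseq_sign pP (ltnSn j.+1).
exists (absz x).-1; have [xp|xn] : 0 < x \/ x < 0 by lia.
  exists p'; split=> //; try lia; first by move=> z /p'b; lia.
  by left; rewrite Ep; congr (_ |` (_ |` _)); lia.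
exists (map -%R p'); split; try lia.
- exact: Pseq_neg.
- by move=> z /mapP [z' /p'b ? ->]; rewrite abszN; lia.
right; rewrite Ep !negFU1; congr (_ |` (_ |` _)); try lia.
by apply/fsetP => w; rewrite in_negF !in_fset /= -{1}[w]opprK (mem_map oppr_inj) opprK.
Qed.

Lemma Pseq1_Bcx p N : Pseq 1 p -> (forall x, x \in p -> (absz x <= N)%N) ->
  [fset z | z in p] \in Bcx 1 1 N.
Proof.
case=> + p_gt0 _ sg fxy _ pN.
case: p p_gt0 sg fxy pN => [|x [|y [|]]] // p_gt0 sg fxy pN _.
have {}sg : (0 < x) = (0 < y) := sg 0%N isT.
have {}fxy : absz y = (absz x).+1 := fxy isT.
have x_gt0 := p_gt0 x (mem_head _ _).
have yN := pN y (mem_last x [:: y]).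
rewrite (Bcx_odd_topE 0 N) in_fsetD in_fset1.
change (Delta 1 N) with (cycle1 N); change (Bcx 1 0 N) with [fset -1 |` [fset N%:Z]].
have -> : [fset z | z in [:: x; y]] = x |` [fset y].
  by apply/fsetP => w; rewrite in_fset !inE.
apply/andP; split.
  apply/negP => /eqP E.
  have : (-1 \in x |` [fset y]) && (N%:Z \in x |` [fset y]) by rewrite E !inE !eqxx orbT.
  by rewrite !inE => /andP[/orP[]/eqP ? /orP[]/eqP ?]; lia.
rewrite !in_fsetU -!orbA; apply/orP.
have [xp|xn] : 0 < x \/ x < 0 by lia.
  left; apply/imfsetP; exists (absz x); rewrite /= ?mem_iota; first lia.
  by congr (_ |` [fset _]); lia.
right; apply/orP; left; apply/imfsetP; exists (absz x); rewrite /= ?mem_iota; first lia.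
by congr (_ |` [fset _]); lia.
Qed.

Lemma Pseq_Bcx_odd_top j p N : Pseq j.+1 p -> (forall x, x \in p -> (absz x <= N)%N) ->
  [fset z | z in p] \in Bcx (2 * j).+1 j.+1 N.
Proof.
elim: j p N => [|j IH] p N pP pN; first exact: Pseq1_Bcx.
have [b [q [qP qb jb bN Ep]]] := Pseq_split_last pP pN.
have qB : [fset z | z in q] \in Bcx (2 * j.+1).-1 j.+1 b.
  by rewrite (_ : (2 * j.+1).-1 = (2 * j).+1); [apply: IH | lia].
have qb' w : w \in [fset z | z in q] -> (absz w <= b)%N by rewrite in_fset => /qb.
have qgap : (2 <= j.+1)%N -> ~ (has_abs [fset z | z in q] b /\ has_abs [fset z | z in q] b.-1).
  by clear -qP qb; case: j qP => // j qP _; exact: Pseq_gap qP qb.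
have [Bpos Bneg] := Bcx_odd_top_extend (ltn0Sn j) jb qb' (card_Pseq qP) qgap qB bN.
by case: Ep => ->.
Qed.

Unset Implicit Arguments.
Theorem mainTheorem7 (k n : nat) (G : {fset int}) :
  (2 <= k)%N -> G `<=` V (n - 3) -> #|` G| = (2 * k - 2)%N -> propP (n - 3) G ->
  G `|` [fset (n - 2)%:Z; (n - 1)%:Z; n%:Z] \in Bcx (2 * k) (k - 1) n.
Proof.
move=> hk _ cG /propP_Pseq [j [p [pP eG pN]]].
have ej : j = k.-1 by move: cG; rewrite eG (card_Pseq pP); lia.
case: k hk cG ej => [|[|k]] // _ _ ej; subst j.
have GB : G \in Bcx (2 * k).+1 k.+1 (n - 3) by rewrite eG; apply: Pseq_Bcx_odd_top.
have [m en] : exists m, n = m.+3.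
  have p0 : (0 < size p)%N by rewrite (Pseq_size pP).
  have := pN _ (mem_nth 0 p0); have := Pseq_abs_gt0 pP (mem_nth 0 p0).
  by exists (n - 3)%N; lia.
have -> : G `|` [fset (n - 2)%:Z; (n - 1)%:Z; n%:Z] =
    m.+3%:Z |` (m.+2%:Z |` (m.+1%:Z |` G)).
  apply/fsetP => w; rewrite en !inE !subSS !subn0.
  by case: (w \in G) (w == m.+1%:Z) (w == m.+2%:Z) (w == m.+3%:Z) => [] [] [] [].
rewrite en !subSS subn0 in GB; rewrite (_ : (2 * k.+2)%N = (2 * k).+4) ?subn1 ?en; last lia.
by apply: (mem_BcxS (mem_BcxS (mem_BcxS GB _ _) _ _)); rewrite /= ?mul2n ?doubleK ?uphalf_double; lia.
Qed.
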